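(* For all positive integers $n$: $|X_n|<\frac{C_1}{\lambda^{n/2}}$, $|Y_n|<\frac{C_1}{\lambda^{n/2}}$, $|Z_n|<\frac{2|\theta|}{\sqrt{3\theta^2-4p}}\cdot\frac{1}{\lambda^{n/2}}\le\frac{\sqrt2 C_1}{\lambda^{n/2}}$, and $|\lambda^n-(3\theta^2-p)c_n|<\frac{(1+\sqrt2)C_1}{\lambda^{n/2}}$.
   Context: Standing setup: $p,q\in\mathbb{Z}$ are such that $x^3-px-q$ is irreducible over $\mathbb{Q}$ with exactly one real root $\theta$ (one has $3\theta^2-4p>0$ and $3\theta^2-p>0$). $K=\mathbb{Q}(\theta)\subset\mathbb{R}$, $\mathcal{O}_K$ its ring of integers. $d$ is a positive integer with $\mathcal{O}_K\subseteq\frac1d\mathbb{Z}[\theta]$. $\lambda\in\mathcal{O}_K$ is a unit with $\lambda>1$. For $n\ge1$ the rationals $a_n,b_n,c_n$ are defined by $a_n+b_n\theta+c_n\theta^2=\lambda^n$, and $X_n=a_n+pc_n-b_n\theta$, $Y_n=a_n+pc_n-c_n\theta^2$, $Z_n=b_n\theta-c_n\theta^2$, $k_n=dc_n$. Constants: $C_1=\max\{\sqrt2,\ \frac{\sqrt2|\theta|}{\sqrt{3\theta^2-4p}}\}$, $C_2=\frac{\sqrt d}{\sqrt{3\theta^2-p}}$. *)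

(* the real numbers are an arbitrary real closed field R. *)
From HB Require Import structures.
From mathcomp Require Import all_boot all_order all_algebra.
Set Implicit Arguments. Unset Strict Implicit. Unset Printing Implicit Defensive.
Import Order.TTheory GRing.Theory Num.Theory.
Local Open Scope ring_scope.

Definition cubicQ (p q : int) : {poly rat} :=
  'X^3 - (p%:~R) *: 'X - (q%:~R)%:P.

(* x lies in K = Q(theta) (theta algebraic, so Q(theta) = Q[theta]). *)
Definition inK (R : fieldType) (theta x : R) : Prop :=
  exists f : {poly rat}, x = (map_poly ratr f).[theta].

Definition alg_integer (R : fieldType) (x : R) : Prop :=
  exists P : {poly int}, P \is monic /\ root (map_poly intr P) x.

Definition inOK (R : fieldType) (theta x : R) : Prop :=
  inK theta x /\ alg_integer x.

Definition unitOK (R : fieldType) (theta x : R) : Prop :=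
  inOK theta x /\ inOK theta x^-1.

Definition Xn (R : fieldType) (p : int) (theta : R) (a b c : rat) : R :=
  ratr a + p%:~R * ratr c - ratr b * theta.
Definition Yn (R : fieldType) (p : int) (theta : R) (a b c : rat) : R :=
  ratr a + p%:~R * ratr c - ratr c * theta ^+ 2.
Definition Zn (R : fieldType) (theta : R) (b c : rat) : R :=
  ratr b * theta - ratr c * theta ^+ 2.

Definition C1 (R : rcfType) (p : int) (theta : R) : R :=
  Num.max (Num.sqrt 2)
          (Num.sqrt 2 * `|theta| / Num.sqrt (3 * theta ^+ 2 - 4 * p%:~R)).

From mathcomp Require Import all_boot all_order all_algebra.
From mathcomp Require Import ring lra zify.
Set Implicit Arguments. Unset Strict Implicit. Unset Printing Implicit Defensive.
Import Order.TTheory GRing.Theory Num.Theory.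
Local Open Scope ring_scope.

(* Write lambda^n = a + b theta + c theta^2 and let U + i sqrt(delta) V, where
   delta = 3 theta^2 - 4 p, be its image under a complex embedding of Q(theta).
   Then X_n = U - theta V, Y_n = U + theta V, Z_n = 2 theta V and
   lambda^n - (3 theta^2 - p) c_n = U + 3 theta V.  As lambda is a unit of
   positive norm, lambda^n (U^2 + delta V^2) = 1: the point (U, sqrt(delta) V)
   lies on the circle of radius lambda^(-n/2), and the bounds are Cauchy-Schwarz
   estimates on that circle.  They are strict because theta^2 <> delta and
   U <> 0 (otherwise lambda^(2n) would be a rational of norm lambda^(6n) = 1).
   That algebraic integers of Q(theta) have integral norm is shown directly, from
   the bounded denominators of their powers. *)

Lemma irredp_dvdp_of_root (F : fieldType) (R : idomainType)
    (f : {rmorphism F -> R}) (P g : {poly F}) (x : R) :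
  irreducible_poly P -> root (map_poly f P) x -> root (map_poly f g) x ->
  P %| g.
Proof.
move=> irrP rootP; apply: contraTT => nPg.
rewrite -(irreducible_poly_coprime g irrP) -(coprimep_map f) in nPg.
exact: coprimep_root nPg rootP.
Qed.

Lemma size_cubicQ (p q : int) : size (cubicQ p q) = 4.
Proof.
rewrite /cubicQ -addrA size_polyDl ?size_polyXn //.
rewrite (leq_ltn_trans (size_polyD _ _)) // gtn_max !size_polyN.
by rewrite (leq_ltn_trans (size_scale_leq _ _)) ?size_polyX // (leq_ltn_trans (size_polyC_leq1 _)).
Qed.

Lemma root_cubicQ (R : numFieldType) (p q : int) (x : R) :
  root (map_poly ratr (cubicQ p q)) x = (x ^+ 3 == p%:~R * x + q%:~R).
Proof.
rewrite /root /cubicQ !rmorphB /= map_polyXn map_polyZ map_polyX map_polyC.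
rewrite !hornerE !rmorph_int -[X in _ - X == 0]/(ratr q%:~R : R) ratr_int.
by rewrite subr_eq0 subr_eq addrC.
Qed.

Lemma cubicQ_root_free (R : numFieldType) (p q : int) (x : R) :
  irreducible_poly (cubicQ p q) -> root (map_poly ratr (cubicQ p q)) x ->
  forall a b c : rat,
  ratr a + ratr b * x + ratr c * x ^+ 2 = 0 -> [/\ a = 0, b = 0 & c = 0].
Proof.
move=> irrP rootP a b c abc0.
pose g := Poly [:: a; b; c].
have rootg : root (map_poly ratr g) x.
  by apply/eqP; rewrite map_Poly /= !horner_cons horner0 -[RHS]abc0; ring.
have /eqP g0 : g == 0.
  have Pg := irredp_dvdp_of_root irrP rootP rootg.
  apply: contraLR (size_Poly [:: a; b; c]) => /dvdp_leq/(_ Pg).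
  by rewrite size_cubicQ -ltnNge.
have coefg i : [:: a; b; c]`_i = 0 by rewrite -coef_Poly -/g g0 coef0.
by split; [exact: (coefg 0) | exact: (coefg 1) | exact: (coefg 2)].
Qed.

Definition tmap (A B : Type) (f : A -> B) (t : A * A * A) : B * B * B :=
  let: (a, b, c) := t in (f a, f b, f c).

Definition tseq (T : Type) (t : T * T * T) : seq T := let: (a, b, c) := t in [:: a; b; c].

Section CubicRing.
Variables (T : comNzRingType) (p q : T).

Definition cmul (s t : T * T * T) : T * T * T :=
  let: (a1, b1, c1) := s in let: (a2, b2, c2) := t in
  (a1 * a2 + q * (b1 * c2 + c1 * b2),
   a1 * b2 + b1 * a2 + p * (b1 * c2 + c1 * b2) + q * c1 * c2,
   a1 * c2 + b1 * b2 + c1 * a2 + p * c1 * c2).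

Definition cexp (t : T * T * T) (k : nat) : T * T * T := iter k (cmul t) (1, 0, 0).

(* The determinant of multiplication by a + b x + c x^2 on the basis 1, x, x^2
   of T[x]/(x^3 - p x - q). *)
Definition cnorm (t : T * T * T) : T :=
  let: (a, b, c) := t in
  a * ((a + p * c) ^+ 2 - b * (p * b + q * c))
  - b * (q * c * (a + p * c) - q * b ^+ 2)
  + c * (q * c * (p * b + q * c) - q * b * (a + p * c)).

Lemma cnormM s t : cnorm (cmul s t) = cnorm s * cnorm t.
Proof. by case: s => [[a1 b1] c1]; case: t => [[a2 b2] c2] /=; ring. Qed.

Lemma cnormX t k : cnorm (cexp t k) = cnorm t ^+ k.
Proof.
elim: k => [|k IHk]; first by rewrite /= expr0; ring.
by rewrite /cexp iterS cnormM -/(cexp t k) IHk exprS.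
Qed.

Lemma cnormZ (c : T) t : cnorm (tmap ( *%R c) t) = c ^+ 3 * cnorm t.
Proof. by case: t => [[a0 b0] c0] /=; ring. Qed.

End CubicRing.

Lemma rmorph_cnorm (A B : comNzRingType) (f : {rmorphism A -> B}) p q t :
  f (cnorm p q t) = cnorm (f p) (f q) (tmap f t).
Proof. by case: t => [[a b] c]; rewrite /= !(rmorphD, rmorphN, rmorphB, rmorphM, rmorphXn). Qed.

Lemma common_denominator (s : seq rat) :
  exists2 D : nat, (0 < D)%N & forall r, r \in s -> exists z : int, D%:R * r = z%:~R.
Proof.
elim: s => [|r s [D D_gt0 Ds]]; first by exists 1%N.
have denqE : (`|denq r|%:R : rat) = (denq r)%:~R.
  by rewrite natr_absz gtr0_norm // denq_gt0.
exists (D * `|denq r|)%N; first by rewrite muln_gt0 D_gt0 absz_gt0 denq_neq0.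
move=> r'; rewrite inE => /predU1P[-> | /Ds[z Dz]].
  by exists (D%:Z * numq r); rewrite natrM denqE intrM numqE; ring.
by exists (z * denq r); rewrite natrM denqE intrM -Dz; ring.
Qed.

(* Every power of the denominator of r divides D. *)
Lemma rat_int_of_powers (r : rat) (D : nat) : (0 < D)%N ->
  (forall k, exists z : int, D%:R * r ^+ k = z%:~R) -> exists z : int, r = z%:~R.
Proof.
move=> D_gt0 DrX.
have denX_dvd k : (`|denq r| ^ k %| D)%N.
  have [z Dz] := DrX k.
  have /(congr1 absz) : D%:Z * numq r ^+ k = z * denq r ^+ k.
    by apply: (@intr_inj rat); rewrite !rmorphM !rmorphXn /= numqE -Dz exprMn mulrA.
  rewrite !abszM !abszX absz_nat => Dnum.
  have cop : coprime (`|denq r| ^ k) (`|numq r| ^ k).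
    by rewrite coprimeXl // coprime_sym coprimeXl // coprime_num_den.
  by rewrite -(Gauss_dvdr _ cop) mulnC Dnum dvdn_mull.
have den1 : denq r = 1.
  rewrite -[denq r]gtz0_abs ?denq_gt0 //; congr Posz; apply/eqP.
  rewrite eqn_leq absz_gt0 denq_neq0 andbT leqNgt; apply/negP => den_gt1.
  by have := dvdn_leq D_gt0 (denX_dvd D); rewrite leqNgt ltn_expl.
by exists (numq r); rewrite -[r in LHS]divq_num_den den1 divr1.
Qed.

Lemma monic_root_powers (R : comNzRingType) (S : R -> Prop) (P : {poly int}) (x : R) :
    P \is monic -> root (map_poly intr P) x ->
    S 0 -> (forall y z, S y -> S z -> S (y + z)) ->
    (forall (k : int) y, S y -> S (k%:~R * y)) ->
    (forall j, (j < (size P).-1)%N -> S (x ^+ j)) ->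
  forall k, S (x ^+ k).
Proof.
move=> monP rootP S0 SD SZ Slow.
set m := (size P).-1.
have sizeP : size P = m.+1 by rewrite prednK // size_poly_gt0 monic_neq0.
have sizePx : size (map_poly intr P : {poly R}) = m.+1.
  by rewrite size_map_poly_id0 // (monicP monP) rmorph1 oner_neq0.
have xm : x ^+ m = - \sum_(i < m) (P`_i)%:~R * x ^+ i.
  have lcP : P`_m = 1 by move/monicP: monP; rewrite lead_coefE sizeP.
  move: rootP; rewrite /root horner_coef sizePx big_ord_recr /= coef_map lcP.
  rewrite -[X in X * x ^+ m]/(1 : R) mul1r addrC addr_eq0 => /eqP ->.
  by congr (- _); apply: eq_bigr => i _; rewrite coef_map.
elim/ltn_ind=> k IHk; have [/Slow //|mk] := ltnP k m.
have -> : x ^+ k = \sum_(i < m) (- P`_i)%:~R * x ^+ (k - m + i).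
  rewrite -{1}(subnK mk) exprD xm mulrN mulr_sumr -sumrN.
  by apply: eq_bigr => i _; rewrite mulrCA -exprD intrN mulNr.
apply: (big_ind S) => // i _; apply: SZ; apply: IHk.
by have := ltn_ord i; lia.
Qed.

Section Embedding.
Variables (R : numFieldType) (p q : int) (theta : R).
Hypothesis theta_root : theta ^+ 3 = p%:~R * theta + q%:~R.

Local Notation qmul := (cmul (p%:~R : rat) q%:~R).
Local Notation qexp := (cexp (p%:~R : rat) q%:~R).
Local Notation qnorm := (cnorm (p%:~R : rat) q%:~R).

Let qE : (q%:~R : R) = theta ^+ 3 - p%:~R * theta.
Proof. by rewrite theta_root addrC addKr. Qed.

Definition ceval (t : rat * rat * rat) : R :=
  let: (a, b, c) := t in ratr a + ratr b * theta + ratr c * theta ^+ 2.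

Lemma cevalM s t : ceval (qmul s t) = ceval s * ceval t.
Proof.
case: s => [[a1 b1] c1]; case: t => [[a2 b2] c2].
by rewrite /= !(rmorphD, rmorphM) /= !ratr_int qE; ring.
Qed.

Lemma cevalX t k : ceval (qexp t k) = ceval t ^+ k.
Proof.
elim: k => [|k IHk]; first by rewrite /= rmorph1 !rmorph0; ring.
by rewrite /cexp iterS cevalM -/(cexp _ _ t k) IHk exprS.
Qed.

Definition delta : R := 3 * theta ^+ 2 - 4 * p%:~R.

(* conj_re t + i sqrt(delta) conj_im t is the image of ceval t under the
   complex embedding theta |-> (- theta + i sqrt(delta)) / 2. *)
Definition conj_re (t : rat * rat * rat) : R :=
  let: (a, b, c) := t in
  ratr a + p%:~R * ratr c - ratr b * theta / 2 - ratr c * theta ^+ 2 / 2.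

Definition conj_im (t : rat * rat * rat) : R :=
  let: (a, b, c) := t in (ratr b - ratr c * theta) / 2.

Lemma conj_imM s t :
  conj_im (qmul s t) = conj_re s * conj_im t + conj_im s * conj_re t.
Proof.
case: s => [[a1 b1] c1]; case: t => [[a2 b2] c2].
by rewrite /= !(rmorphD, rmorphM) /= !ratr_int qE; field; rewrite ?pnatr_eq0.
Qed.

Lemma ceval_norm t :
  ceval t * (conj_re t ^+ 2 + delta * conj_im t ^+ 2) = ratr (qnorm t).
Proof.
rewrite (rmorph_cnorm ratr) !rmorph_int.
by case: t => [[a b] c]; rewrite /= qE /delta; field; rewrite ?pnatr_eq0.
Qed.

Lemma Xn_conj a b c : Xn p theta a b c = conj_re (a, b, c) - theta * conj_im (a, b, c).
Proof. by rewrite /Xn /=; field; rewrite ?pnatr_eq0. Qed.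

Lemma Yn_conj a b c : Yn p theta a b c = conj_re (a, b, c) + theta * conj_im (a, b, c).
Proof. by rewrite /Yn /=; field; rewrite ?pnatr_eq0. Qed.

Lemma Zn_conj a b c : Zn theta b c = 2 * theta * conj_im (a, b, c).
Proof. by rewrite /Zn /=; field; rewrite ?pnatr_eq0. Qed.

Lemma ceval_sub_conj a b c :
  ceval (a, b, c) - (3 * theta ^+ 2 - p%:~R) * ratr c
  = conj_re (a, b, c) + 3 * theta * conj_im (a, b, c).
Proof. by rewrite /=; field; rewrite ?pnatr_eq0. Qed.

Hypothesis theta_free : forall a b c : rat,
  ratr a + ratr b * theta + ratr c * theta ^+ 2 = 0 -> [/\ a = 0, b = 0 & c = 0].

Lemma ceval_inj : injective ceval.
Proof.
move=> [[a1 b1] c1] [[a2 b2] c2] /= /eqP; rewrite -subr_eq0 => /eqP eq12.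
have [] := @theta_free (a1 - a2) (b1 - b2) (c1 - c2).
  by rewrite -[RHS]eq12 !rmorphB /=; ring.
by move=> /subr0_eq-> /subr0_eq-> /subr0_eq->.
Qed.

Lemma ceval_inK x : inK theta x -> exists t, x = ceval t.
Proof.
move=> [f ->]; elim/poly_ind: f => [|f c [t IHf]].
  by exists (0, 0, 0); rewrite rmorph0 horner0 /= !rmorph0; ring.
have [[[a b] c'] tX] : exists t', ceval t' = ceval t * theta.
  by exists (qmul t (0, 1, 0)); rewrite cevalM /= rmorph0 rmorph1; ring.
exists (a + c, b, c'); rewrite rmorphD rmorphM /= map_polyX map_polyC !hornerE.
by rewrite IHf -tX /= rmorphD; ring.
Qed.

(* The powers of the algebraic integer ceval t all lie in (1/D) Z[theta] for a
   fixed D, so D^3 N(t)^k is an integer for every k. *)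
Lemma cnorm_int t : alg_integer (ceval t) -> exists z : int, qnorm t = z%:~R.
Proof.
move=> [P [monP rootP]]; set m := (size P).-1.
have [D D_gt0 Dden] := common_denominator (flatten [seq tseq (qexp t j) | j <- iota 0 m]).
pose S (y : R) := exists u v w : int,
  D%:R * y = u%:~R + v%:~R * theta + w%:~R * theta ^+ 2.
have DS k : S (ceval t ^+ k).
  apply: (monic_root_powers monP rootP).
  - by exists 0, 0, 0; rewrite mulr0; ring.
  - move=> y z [u [v [w Dy]]] [u' [v' [w' Dz]]]; exists (u + u'), (v + v'), (w + w').
    by rewrite mulrDr Dy Dz !rmorphD; ring.
  - move=> k' y [u [v [w Dy]]]; exists (k' * u), (k' * v), (k' * w).
    by rewrite mulrCA Dy !rmorphM; ring.
  move=> j jm; rewrite -cevalX.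
  have Dcoord r : r \in tseq (qexp t j) -> exists z : int, D%:R * r = z%:~R.
    move=> rj; apply: Dden; apply/flattenP; exists (tseq (qexp t j)) => //.
    by apply/mapP; exists j; rewrite // mem_iota.
  case: (qexp t j) Dcoord => [[a b] c] /= Dcoord.
  have [u Du] := Dcoord a (mem_head _ _).
  have [v Dv] : exists v : int, D%:R * b = v%:~R by apply: Dcoord; rewrite !inE eqxx orbT.
  have [w Dw] : exists w : int, D%:R * c = w%:~R by apply: Dcoord; rewrite !inE eqxx !orbT.
  have ratrD r (z : int) : D%:R * r = z%:~R -> D%:R * (ratr r : R) = z%:~R.
    by move=> Dr; rewrite -(rmorph_nat ratr) -rmorphM Dr rmorph_int.
  by exists u, v, w; rewrite -(ratrD _ _ Du) -(ratrD _ _ Dv) -(ratrD _ _ Dw); ring.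
apply: (@rat_int_of_powers _ (D ^ 3)) => [|k]; first by rewrite expn_gt0 D_gt0.
have [u [v [w Duvw]]] := DS k.
have coordE : tmap ( *%R D%:R) (qexp t k) = (u%:~R, v%:~R, w%:~R).
  apply: ceval_inj; rewrite /= !ratr_int -Duvw -cevalX.
  by case: (qexp t k) => [[a b] c] /=; rewrite !rmorphM !rmorph_nat; ring.
exists (cnorm p q (u, v, w)).
by rewrite (rmorph_cnorm intr) natrX -cnormX -cnormZ coordE.
Qed.

Lemma conj_re_neq0 t : 1 < ceval t -> qnorm t = 1 -> conj_re t != 0.
Proof.
move=> x_gt1 norm1; apply/eqP => re0.
have norm_sqr : qnorm (qmul t t) = 1 by rewrite cnormM norm1 mulr1.
have im0 : conj_im (qmul t t) = 0 by rewrite conj_imM re0 mul0r mulr0 addr0.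
move: im0 (cevalM t t) (ceval_norm (qmul t t)); rewrite norm_sqr rmorph1.
move: (qmul t t) => [[a b] c] /= /eqP.
rewrite mulf_eq0 invr_eq0 pnatr_eq0 orbF subr_eq0 => /eqP bE sqrE.
have [_ b0 nc0] : [/\ 0 = 0 :> rat, b = 0 & - c = 0].
  by apply: theta_free; rewrite rmorph0 add0r rmorphN bE; ring.
have c0 : c = 0 by rewrite -[c]opprK nc0 oppr0.
rewrite b0 c0 !rmorph0 !(mul0r, mulr0, subr0, addr0) in sqrE *.
rewrite sqrE expr0n mulr0 addr0 -expr2 -exprM -exprD => /eqP.
by rewrite gt_eqF // exprn_egt1.
Qed.

End Embedding.

Section Estimates.
Variable R : rcfType.
Implicit Types x y u v k r C : R.

Lemma ltr_norm_sqr x y : 0 < y -> x ^+ 2 < y ^+ 2 -> `|x| < y.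
Proof.
move=> y_gt0 xy; rewrite -(ltr_pXn2r (ltn0Sn 1)) ?nnegrE ?normr_ge0 ?ltW //.
by rewrite real_normK ?num_real.
Qed.

Lemma norm_add_mul_lt u v k C r : 0 < C -> 0 < r ->
  u ^+ 2 + v ^+ 2 = r ^+ 2 -> 1 + k ^+ 2 < C ^+ 2 -> `|u + k * v| < C * r.
Proof.
move=> C_gt0 r_gt0 uvr kC; apply: ltr_norm_sqr; first exact: mulr_gt0.
have cauchy_schwarz : (u + k * v) ^+ 2 <= (1 + k ^+ 2) * (u ^+ 2 + v ^+ 2).
  by rewrite -subr_ge0 (_ : _ - _ = (k * u - v) ^+ 2) ?sqr_ge0 //; ring.
apply: (le_lt_trans cauchy_schwarz); rewrite uvr exprMn ltr_pM2r //.
by rewrite exprn_gt0.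
Qed.

Lemma norm_lt_sqr_add u v r : u != 0 -> 0 < r -> u ^+ 2 + v ^+ 2 = r ^+ 2 -> `|v| < r.
Proof.
move=> u_neq0 r_gt0 uvr; apply: ltr_norm_sqr => //.
by rewrite -uvr ltrDr exprn_even_gt0.
Qed.

Lemma sqr_max_sqrt2_gt k : k ^+ 2 != 1 ->
  1 + k ^+ 2 < Num.max (Num.sqrt 2) (Num.sqrt 2 * `|k|) ^+ 2.
Proof.
move=> k2_neq1.
have sqr_le x y : 0 <= x -> x <= y -> x ^+ 2 <= y ^+ 2.
  by move=> x_ge0 xy; rewrite !expr2 ler_pM.
have sqrt2_sqr : Num.sqrt 2 ^+ 2 = 2 :> R by rewrite sqr_sqrtr.
have M_ge2 : 2 <= Num.max (Num.sqrt 2) (Num.sqrt 2 * `|k|) ^+ 2.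
  by rewrite -{1}sqrt2_sqr sqr_le ?sqrtr_ge0 // le_max lexx.
have M_ge2k : 2 * k ^+ 2 <= Num.max (Num.sqrt 2) (Num.sqrt 2 * `|k|) ^+ 2.
  rewrite -[2 * _](_ : (Num.sqrt 2 * `|k|) ^+ 2 = _); last first.
    by rewrite exprMn sqrt2_sqr real_normK ?num_real.
  by rewrite sqr_le ?mulr_ge0 ?sqrtr_ge0 ?normr_ge0 // le_max lexx orbT.
have [k2_lt1|k2_gt1|/eqP] := ltgtP (k ^+ 2) 1; last by rewrite (negPf k2_neq1).
- apply: (lt_le_trans _ M_ge2); by rewrite -[2]/(1 + 1 : R) ltrD2l.
- apply: (lt_le_trans _ M_ge2k); by rewrite mulr2n mulrDl mul1r ltrD2r.
Qed.

Lemma normalized_estimates u V k r : u != 0 -> k != 0 -> k ^+ 2 != 1 -> 0 < r ->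
  u ^+ 2 + V ^+ 2 = r ^+ 2 ->
  let C := Num.max (Num.sqrt 2) (Num.sqrt 2 * `|k|) in
  [/\ `|u - k * V| < C * r, `|u + k * V| < C * r, `|2 * k * V| < 2 * `|k| * r,
      2 * `|k| * r <= Num.sqrt 2 * C * r
    & `|u + 3 * k * V| < (1 + Num.sqrt 2) * C * r].
Proof.
move=> u_neq0 k_neq0 k2_neq1 r_gt0 uVr C.
have C_gt0 : 0 < C by rewrite lt_max sqrtr_gt0 ltr0n.
have C_gt : 1 + k ^+ 2 < C ^+ 2 by rewrite sqr_max_sqrt2_gt.
have bound_Z : `|2 * k * V| < 2 * `|k| * r.
  rewrite -!mulrA normrM ger0_norm ?ler0n // ltr_pM2l ?ltr0n // normrM.
  by rewrite ltr_pM2l ?normr_gt0 // (norm_lt_sqr_add u_neq0 r_gt0 uVr).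
have bound_Z_C : 2 * `|k| * r <= Num.sqrt 2 * C * r.
  have two : 2 = Num.sqrt 2 * Num.sqrt 2 :> R by rewrite -expr2 sqr_sqrtr ?ler0n.
  rewrite ler_pM2r // {1}two -mulrA ler_pM2l ?sqrtr_gt0 ?ltr0n //.
  by rewrite le_max lexx orbT.
have bound_Y : `|u + k * V| < C * r by rewrite norm_add_mul_lt.
split=> //.
- by rewrite -mulNr norm_add_mul_lt // sqrrN.
- rewrite (_ : u + 3 * k * V = (u + k * V) + 2 * k * V); last by ring.
  rewrite (le_lt_trans (ler_normD _ _)) //.
  have -> : (1 + Num.sqrt 2) * C * r = C * r + Num.sqrt 2 * C * r by ring.
  exact: ltr_leD bound_Y (ltW (lt_le_trans bound_Z bound_Z_C)).
Qed.

Lemma conj_estimates th u v d e :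
  0 < d -> th != 0 -> th ^+ 2 != d -> u != 0 -> 0 < e ->
  e * (u ^+ 2 + d * v ^+ 2) = 1 ->
  let s := Num.sqrt e in let w := Num.sqrt d in
  let C := Num.max (Num.sqrt 2) (Num.sqrt 2 * `|th| / w) in
  [/\ `|u - th * v| < C / s, `|u + th * v| < C / s,
      `|2 * th * v| < 2 * `|th| / w * (1 / s),
      2 * `|th| / w * (1 / s) <= Num.sqrt 2 * C / s
    & `|u + 3 * th * v| < (1 + Num.sqrt 2) * C / s].
Proof.
move=> d_gt0 th_neq0 th2_neq_d u_neq0 e_gt0 norm1 s w C.
have w_gt0 : 0 < w by rewrite sqrtr_gt0.
have w_sqr : w ^+ 2 = d by rewrite sqr_sqrtr // ltW.
have thE : th = th / w * w by rewrite divfK ?gt_eqF.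
have k_neq0 : th / w != 0 by rewrite mulf_neq0 // invr_eq0 gt_eqF.
have k2_neq1 : (th / w) ^+ 2 != 1.
  by apply: contra th2_neq_d => /eqP k2; rewrite thE exprMn k2 mul1r w_sqr.
have r_gt0 : 0 < 1 / s by rewrite divr_gt0 ?sqrtr_gt0.
have uVr : u ^+ 2 + (w * v) ^+ 2 = (1 / s) ^+ 2.
  rewrite expr_div_n expr1n sqr_sqrtr ?ltW // -norm1 [e * _]mulrC mulfK ?gt_eqF //.
  by rewrite exprMn w_sqr.
have := normalized_estimates u_neq0 k_neq0 k2_neq1 r_gt0 uVr.
rewrite normf_div (gtr0_norm w_gt0) mulrA -/C !mulrA -thE !mulr1 !div1r.
by rewrite !divfK ?gt_eqF.
Qed.

End Estimates.

Section RealEmbedding.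
Variables (R : rcfType) (p q : int) (theta : R).
Hypothesis theta_root : theta ^+ 3 = p%:~R * theta + q%:~R.
Hypothesis theta_free : forall a b c : rat,
  ratr a + ratr b * theta + ratr c * theta ^+ 2 = 0 -> [/\ a = 0, b = 0 & c = 0].
Hypothesis theta_unique : forall x : R, x ^+ 3 = p%:~R * x + q%:~R -> x = theta.

Local Notation qmul := (cmul (p%:~R : rat) q%:~R).
Local Notation qexp := (cexp (p%:~R : rat) q%:~R).
Local Notation qnorm := (cnorm (p%:~R : rat) q%:~R).
Local Notation delta := (delta p theta).

Lemma theta_neq0 : theta != 0.
Proof.
apply/eqP => theta0.
have [_ /eqP + _] : [/\ 0 = 0 :> rat, 1 = 0 :> rat & 0 = 0 :> rat].
  by apply: theta_free; rewrite theta0 rmorph0 rmorph1 expr0n /= !mulr0 !addr0.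
by rewrite oner_eq0.
Qed.

Lemma theta_sqr_neq_delta : theta ^+ 2 != delta.
Proof.
apply/eqP => sqrE.
have [_ _ /eqP] : [/\ - 4 * p%:~R = 0 :> rat, 0 = 0 :> rat & 2 = 0 :> rat].
  apply: theta_free; rewrite rmorph0 rmorphM rmorphN !rmorph_int rmorph_nat mul0r addr0.
  by move: sqrE; rewrite /delta; lra.
by rewrite pnatr_eq0.
Qed.

(* Otherwise x^2 + theta x + theta^2 - p, the cofactor of x - theta in the
   cubic, has the real root (sqrt(- delta) - theta) / 2, which must be theta. *)
Lemma delta_gt0 : 0 < delta.
Proof.
rewrite ltNge; apply/negP => delta_le0.
pose z := Num.sqrt (- delta); pose r := (z - theta) / 2.
have z_sqr : z ^+ 2 = - delta by rewrite sqr_sqrtr // oppr_ge0.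
have cofactorE : r ^+ 2 + theta * r + theta ^+ 2 - p%:~R = (z ^+ 2 + delta) / 4.
  by rewrite /r /delta; field; rewrite ?pnatr_eq0.
have cofactor0 : r ^+ 2 + theta * r + theta ^+ 2 - p%:~R = 0.
  by rewrite cofactorE z_sqr addNr mul0r.
have rE : r = theta.
  apply: theta_unique; apply/eqP; rewrite -subr_eq0.
  have -> : r ^+ 3 - (p%:~R * r + q%:~R) =
      (r - theta) * (r ^+ 2 + theta * r + theta ^+ 2 - p%:~R).
    have -> : (q%:~R : R) = theta ^+ 3 - p%:~R * theta by rewrite theta_root addrC addKr.
    ring.
  by rewrite cofactor0 mulr0.
have [_ _ /eqP] : [/\ - p%:~R = 0 :> rat, 0 = 0 :> rat & 3 = 0 :> rat].
  apply: theta_free; rewrite rmorph0 rmorphN rmorph_int rmorph_nat mul0r addr0.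
  by rewrite -cofactor0 rE; ring.
by rewrite pnatr_eq0.
Qed.

Lemma cnorm_unit t : unitOK theta (ceval theta t) -> 0 < ceval theta t -> qnorm t = 1.
Proof.
move=> [[_ x_int] [xV_inK xV_int]] x_gt0.
have [t' t'E] := ceval_inK theta_root xV_inK.
rewrite t'E in xV_int.
have [z zE] := cnorm_int theta_root theta_free x_int.
have [z' z'E] := cnorm_int theta_root theta_free xV_int.
have tt' : qmul t t' = (1, 0, 0).
  apply: (ceval_inj theta_free); rewrite cevalM // -t'E divff ?gt_eqF //.
  by rewrite /= rmorph1 !rmorph0; ring.
have zz' : z * z' = 1.
  apply: (@intr_inj rat); rewrite intrM -zE -z'E -cnormM tt' /=; ring.
have z_ge0 : 0 <= z.
  rewrite -(ler0z rat) -zE -(ler0q R) -(ceval_norm theta_root).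
  apply: mulr_ge0; first exact: ltW.
  by rewrite addr_ge0 ?sqr_ge0 // mulr_ge0 ?sqr_ge0 // ltW // delta_gt0.
rewrite zE; case: z z_ge0 zz' {zE} => // k _; rewrite mulrC => /eqP.
by rewrite intUnitRing.mulzn_eq1 => /andP[_ /eqP ->].
Qed.

Lemma cnorm_unit_pow t s n : unitOK theta (ceval theta t) -> 0 < ceval theta t ->
  ceval theta s = ceval theta t ^+ n -> qnorm s = 1.
Proof.
move=> unit_x x_gt0 sE.
have -> : s = qexp t n by apply: (ceval_inj theta_free); rewrite cevalX.
by rewrite cnormX cnorm_unit // expr1n.
Qed.

End RealEmbedding.

Theorem mainTheorem7 (R : rcfType) (p q : int) (theta : R) (d : nat)
    (lambda : R) (a b c : nat -> rat)
    (Hirr : irreducible_poly (cubicQ p q))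
    (Hroot : forall x : R, root (map_poly ratr (cubicQ p q)) x <-> x = theta)
    (Hd : (0 < d)%N)
    (HOK : forall x : R, inOK theta x ->
       exists u v w : int, d%:R * x = u%:~R + v%:~R * theta + w%:~R * theta ^+ 2)
    (Hunit : unitOK theta lambda) (Hlam : 1 < lambda)
    (Habc : forall n : nat, (0 < n)%N ->
       lambda ^+ n = ratr (a n) + ratr (b n) * theta + ratr (c n) * theta ^+ 2) :
  forall n : nat, (0 < n)%N ->
    let s := Num.sqrt (lambda ^+ n) in
    [/\ `|Xn p theta (a n) (b n) (c n)| < C1 p theta / s,
        `|Yn p theta (a n) (b n) (c n)| < C1 p theta / s,
        `|Zn theta (b n) (c n)|
           < 2 * `|theta| / Num.sqrt (3 * theta ^+ 2 - 4 * p%:~R) * (1 / s),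
        2 * `|theta| / Num.sqrt (3 * theta ^+ 2 - 4 * p%:~R) * (1 / s)
           <= Num.sqrt 2 * C1 p theta / s
      & `|lambda ^+ n - (3 * theta ^+ 2 - p%:~R) * ratr (c n)|
           < (1 + Num.sqrt 2) * C1 p theta / s].
Proof.
move=> n n_gt0 s.
have theta_root : theta ^+ 3 = p%:~R * theta + q%:~R.
  by apply/eqP; rewrite -root_cubicQ Hroot.
have theta_free := cubicQ_root_free Hirr ((Hroot theta).2 erefl).
have theta_unique x : x ^+ 3 = p%:~R * x + q%:~R -> x = theta.
  by move/eqP; rewrite -root_cubicQ => /Hroot.
pose t m := (a m, b m, c m).
have tE m : (0 < m)%N -> ceval theta (t m) = lambda ^+ m by move=> /Habc->.
have lambda_gt0 : 0 < lambda := lt_trans ltr01 Hlam.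
have unit1 : unitOK theta (ceval theta (t 1%N)) by rewrite tE ?expr1.
have norm1 : cnorm (p%:~R : rat) q%:~R (t n) = 1.
  by apply: (cnorm_unit_pow theta_root theta_free theta_unique unit1); rewrite !tE ?expr1.
have tn_gt1 : 1 < ceval theta (t n) by rewrite tE // exprn_egt1 // -lt0n.
have tn_norm : lambda ^+ n * (conj_re p theta (t n) ^+ 2
    + delta p theta * conj_im theta (t n) ^+ 2) = 1.
  by rewrite -tE // (ceval_norm theta_root) norm1 rmorph1.
have [] := conj_estimates (delta_gt0 theta_root theta_free theta_unique)
  (theta_neq0 theta_free) (theta_sqr_neq_delta p theta_free)
  (conj_re_neq0 theta_root theta_free tn_gt1 norm1) (exprn_gt0 n lambda_gt0) tn_norm.
rewrite -/s -Xn_conj -Yn_conj -(Zn_conj _ (a n)) -(tE n n_gt0) ceval_sub_conj.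
by split.
Qed.
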